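(* Let $M$ and $M'$ be sets of equatorial measurement angles in $[0,\pi)$ with $|M|,|M'|\ge2$, and let $U$ be a single-qubit unitary such that $UMU^\dagger=M'$ modulo $\pi$, i.e. for every $\varphi\in M$ there is $\varphi'$ with $UE_\varphi U^\dagger=\pm E_{\varphi'}$, and $\{\varphi'\bmod\pi:\varphi\in M\}=M'$. Then, up to a global phase, $U=X^aP_\theta$ for some $\theta\in[0,2\pi)$ and $a\in\{0,1\}$, where $P_\theta=\mathrm{diag}(1,e^{i\theta})$ is the phase gate.
   Context: For $\varphi\in\mathbb{R}$, the equatorial measurement with angle $\varphi$ is the observable $E_\varphi=\cos\varphi\,X+\sin\varphi\,Y$, where $X,Y$ are Pauli matrices; note $E_{\varphi+\pi}=-E_\varphi$. *)

From HB Require Import structures.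
From mathcomp Require Import all_boot all_order all_algebra.
From mathcomp Require Import complex.
From mathcomp Require Import all_classical all_reals all_analysis.
Set Implicit Arguments. Unset Strict Implicit. Unset Printing Implicit Defensive.
Import Order.TTheory GRing.Theory Num.Theory.
Local Open Scope ring_scope.
Local Open Scope complex_scope.

Section Defs.
Variable R : realType.
Local Notation C := R[i].

Definition pauliX : 'M[C]_2 := \matrix_(i < 2, j < 2) (if i != j then 1 else 0).
Definition pauliY : 'M[C]_2 :=
  \matrix_(i < 2, j < 2)
    (if (i == 0 :> nat) && (j == 1 :> nat) then - 'i
     else if (i == 1 :> nat) && (j == 0 :> nat) then 'i else 0).

Definition equat (phi : R) : 'M[C]_2 :=
  (cos phi)%:C *: pauliX + (sin phi)%:C *: pauliY.

Definition adjmx (A : 'M[C]_2) : 'M[C]_2 := (map_mx (fun z => z^*) A)^T.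

Definition qubit_unitary (U : 'M[C]_2) : Prop := U *m adjmx U = 1%:M.

Definition expi (t : R) : C := (cos t +i* sin t).

Definition phase_gate (t : R) : 'M[C]_2 :=
  \matrix_(i < 2, j < 2)
    (if i != j then 0 else if (i == 0 :> nat) then 1 else expi t).

Definition modpi (x : R) : R := x - pi * (Num.floor (x / pi))%:~R.
End Defs.

From mathcomp Require Import all_boot all_order all_algebra.
From mathcomp Require Import complex ring lra.
From mathcomp Require Import all_classical all_reals all_analysis.
Set Implicit Arguments. Unset Strict Implicit. Unset Printing Implicit Defensive.
Import Order.TTheory GRing.Theory Num.Theory.
Local Open Scope ring_scope.
Local Open Scope complex_scope.

(* The conjugate U E_phi U^dagger = +-E_phi' has zero diagonal, and its (0,0)
   entry is 2 Re (u01 conj(u00) e^{i phi}).  This real part vanishing for two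
   angles distinct modulo pi forces u01 conj(u00) = 0, so the unitary U is
   diagonal or antidiagonal, i.e. c P_theta or c X P_theta with |c| = 1. *)

Section Qubit.
Variable R : realType.
Local Notation C := R[i].

Lemma ord2P (i : 'I_2) : i = 0 \/ i = 1.
Proof. by case: i => [[|[|//]]] Hi; [left|right]; apply: val_inj. Qed.

Lemma matrix2P (A B : 'M[C]_2) :
  A 0 0 = B 0 0 -> A 0 1 = B 0 1 -> A 1 0 = B 1 0 -> A 1 1 = B 1 1 -> A = B.
Proof.
move=> e00 e01 e10 e11; apply/matrixP => i j.
by case: (ord2P i) => ->; case: (ord2P j) => ->.
Qed.

Lemma lift0_ord0 : lift ord0 ord0 = 1 :> 'I_2. Proof. exact: val_inj. Qed.

Lemma equat_diag (phi : R) (i : 'I_2) : equat phi i i = 0.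
Proof. by rewrite !mxE; case: (ord2P i) => -> /=; rewrite !mulr0 addr0. Qed.

Lemma equat_conj_diag (U : 'M[C]_2) (phi : R) (i : 'I_2) :
  let z := U i 1 * expi phi * (U i 0)^* in
  (U *m equat phi *m adjmx U) i i = z + z^*.
Proof.
rewrite /equat /adjmx /pauliX /pauliY /expi.
rewrite !(mxE, big_ord_recl, big_ord0) /= lift0_ord0.
move: (U i 0) (U i 1) => [a1 a2] [b1 b2].
rewrite /GRing.scale /=; simpc.
by apply/eqP; rewrite eq_complex /=; apply/andP; split; apply/eqP; ring.
Qed.

Lemma imaginary_rotations_eq0 (w : C) (p1 p2 : R) : sin (p1 - p2) != 0 ->
  let z1 := w * expi p1 in let z2 := w * expi p2 in
  z1 + z1^* = 0 -> z2 + z2^* = 0 -> w = 0.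
Proof.
rewrite /expi sinB => hD; case: w => w1 w2 /=; simpc.
move=> /eqP; rewrite eq_complex /= => /andP[/eqP e1 _].
move=> /eqP; rewrite eq_complex /= => /andP[/eqP e2 _].
have {}e1 : w1 * cos p1 = w2 * sin p1 by lra.
have {}e2 : w1 * cos p2 = w2 * sin p2 by lra.
have h1 : w1 * (sin p1 * cos p2 - cos p1 * sin p2) = 0.
  have -> : w1 * (sin p1 * cos p2 - cos p1 * sin p2) =
            sin p1 * (w1 * cos p2) - sin p2 * (w1 * cos p1) by ring.
  by rewrite e1 e2; ring.
have h2 : w2 * (sin p1 * cos p2 - cos p1 * sin p2) = 0.
  have -> : w2 * (sin p1 * cos p2 - cos p1 * sin p2) =
            cos p2 * (w2 * sin p1) - cos p1 * (w2 * sin p2) by ring.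
  by rewrite -e1 -e2; ring.
by move/eqP: h1; move/eqP: h2; rewrite !mulf_eq0 (negPf hD) !orbF => /eqP -> /eqP ->.
Qed.

Lemma sin_sub_neq0 (p1 p2 : R) :
  0 <= p1 < pi -> 0 <= p2 < pi -> p1 != p2 -> sin (p1 - p2) != 0.
Proof.
move=> /andP[h1 h1'] /andP[h2 h2']; case: (ltgtP p1 p2) => // h _.
- by rewrite -oppr_eq0 -sinN opprB; apply/lt0r_neq0/sin_gt0_pi; apply/andP; split; lra.
- by apply/lt0r_neq0/sin_gt0_pi; apply/andP; split; lra.
Qed.

Lemma unitary_rows (U : 'M[C]_2) : qubit_unitary U ->
  forall i j : 'I_2, U i 0 * (U j 0)^* + U i 1 * (U j 1)^* = (i == j)%:R.
Proof.
move=> HU i j; move/matrixP/(_ i j): HU.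
by rewrite /adjmx !(mxE, big_ord_recl, big_ord0) /= lift0_ord0 addr0.
Qed.

Lemma norm_unit (z : C) : z * z^* = 1 -> `|z| = 1.
Proof. by rewrite -normCK => /eqP; rewrite sqrp_eq1 // => /eqP. Qed.

Lemma expi_onto (z : C) : z * z^* = 1 ->
  exists t : R, 0 <= t < 2 * pi /\ expi t = z.
Proof.
case: z => x y; simpc => /eqP; rewrite eq_complex /= => /andP[/eqP H _].
have hx : x \in `[-1, 1] by rewrite in_itv /=; apply/andP; split; nra.
have hs : sin (acos x) = `|y|.
  by rewrite sin_acos ?(itvP hx) // -sqrtr_sqr; congr Num.sqrt; lra.
have pi0 := @pi_gt0 R.
case: (lerP 0 y) => hy.
- exists (acos x); split.
    by rewrite acos_ge0 ?(itvP hx) //= (le_lt_trans (acos_lepi _)) ?(itvP hx) //; lra.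
  by rewrite /expi acosK // hs ger0_norm.
- have hx1 : x < 1 by nra.
  exists (pi *+ 2 - acos x); split.
    have := acos_gt0 (x:=x); have := acos_lepi (x:=x).
    rewrite !(itvP hx) hx1 /= => /(_ isT) h1 /(_ isT) h2; rewrite -mulr_natl; lra.
  rewrite /expi cosB sinB cos2pi sin2pi acosK // hs ltr0_norm // mul1r mul0r.
  by congr (_ +i* _); ring.
Qed.

Lemma unit_ratio_expi (a d : C) : a * a^* = 1 -> d * d^* = 1 ->
  exists t : R, 0 <= t < 2 * pi /\ d = a * expi t.
Proof.
move=> ha hd; have [|t [ht et]] := @expi_onto (d * a^*).
  by rewrite rmorphM /= conjCK mulrACA hd [a^* * a]mulrC ha mulr1.
by exists t; rewrite et mulrCA ha mulr1.
Qed.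

Lemma unit_orthogonal_eq0 (a c : C) : a * a^* = 1 -> c * a^* = 0 -> c = 0.
Proof. by move=> ha hc; rewrite -[c]mulr1 -ha mulrCA hc mulr0. Qed.

Lemma unitary_diag (U : 'M[C]_2) : qubit_unitary U -> U 0 1 = 0 ->
  exists (c : C) (t : R), `|c| = 1 /\ 0 <= t < 2 * pi /\ U = c *: phase_gate t.
Proof.
move=> HU b0; have := unitary_rows HU.
move=> /[dup] /(_ 0 0) + /[dup] /(_ 1 0) + /(_ 1 1).
rewrite b0 conjC0 mul0r mulr0 !addr0 /= => ha hc hd.
have c0 := unit_orthogonal_eq0 ha hc.
rewrite c0 mul0r add0r in hd.
have [t [ht et]] := unit_ratio_expi ha hd.
exists (U 0 0), t; split; first exact: norm_unit.
by split=> //; apply: matrix2P; rewrite !mxE /= ?mulr1 ?mulr0.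
Qed.

Lemma unitary_antidiag (U : 'M[C]_2) : qubit_unitary U -> U 0 0 = 0 ->
  exists (c : C) (t : R),
    `|c| = 1 /\ 0 <= t < 2 * pi /\ U = c *: (pauliX R *m phase_gate t).
Proof.
move=> HU a0; have := unitary_rows HU.
move=> /[dup] /(_ 0 0) + /[dup] /(_ 1 0) + /(_ 1 1).
rewrite a0 conjC0 mul0r mulr0 !add0r /= => hb hd hc.
have d0 := unit_orthogonal_eq0 hb hd.
rewrite d0 mul0r addr0 in hc.
have [t [ht et]] := unit_ratio_expi hc hb.
exists (U 1 0), t; split; first exact: norm_unit.
split=> //; apply: matrix2P; rewrite !(mxE, big_ord_recl, big_ord0) /= ?et ?a0 ?d0;
  by rewrite !(mul0r, mulr0, mul1r, mulr1, addr0, add0r).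
Qed.

End Qubit.

Local Close Scope complex_scope.
Local Open Scope classical_set_scope.

Theorem lemma30 (R : realType) (M M' : set R) (U : 'M[R[i]]_2) :
  M `<=` `[0, pi[ -> M' `<=` `[0, pi[ ->
  (exists phi1 phi2, M phi1 /\ M phi2 /\ phi1 <> phi2) ->
  (exists phi1 phi2, M' phi1 /\ M' phi2 /\ phi1 <> phi2) ->
  qubit_unitary U ->
  (exists f : R -> R,
     (forall phi, M phi ->
        U *m equat phi *m adjmx U = equat (f phi) \/
        U *m equat phi *m adjmx U = - equat (f phi)) /\
     [set modpi (f phi) | phi in M] = M') ->
  exists (c : R[i]) (theta : R) (a : bool),
    `|c| = 1 /\ 0 <= theta < 2 * pi /\
    U = c *: ((if a then pauliX R else 1%:M) *m phase_gate theta).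
Proof.
move=> HM _ [p1 [p2 [M1 [M2 /eqP p12]]]] _ HU [f [Hf _]].
have diag0 phi : M phi -> (U *m equat phi *m adjmx U) 0 0 = 0.
  by move=> /Hf [] ->; [|rewrite mxE]; rewrite equat_diag ?oppr0.
have inM phi : M phi -> 0 <= phi < pi by move/HM; rewrite /= in_itv.
have : U 0 1 * (U 0 0)^* = 0.
  apply: (@imaginary_rotations_eq0 _ _ p1 p2); first exact: sin_sub_neq0 (inM _ M1) (inM _ M2) p12.
  - by rewrite mulrAC -equat_conj_diag diag0.
  - by rewrite mulrAC -equat_conj_diag diag0.
move/eqP; rewrite mulf_eq0 conjC_eq0 => /orP[/eqP b0 | /eqP a0].
- have [c [t [c1 [t_range ->]]]] := unitary_diag HU b0.
  by exists c, t, false; rewrite mul1mx.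
- have [c [t [c1 [t_range ->]]]] := unitary_antidiag HU a0.
  by exists c, t, true.
Qed.
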